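(* Let $G_1,G_2$ be multiplicative Lie algebras and $\mu:G_1\to G_2$ a multiplicative Lie algebra homomorphism such that $\ker\mu\cap{}^M[G_1,G_1]=1$ and $\mu(G_1)\,\mathcal Z(G_2)=G_2$. Then the map $\nu:G_1/\mathcal Z(G_1)\to G_2/\mathcal Z(G_2)$, $\nu(g\mathcal Z(G_1))=\mu(g)\mathcal Z(G_2)$, together with $\mu|_{{}^M[G_1,G_1]}$, forms an isoclinism $(\nu,\mu|_{{}^M[G_1,G_1]})$ between $G_1$ and $G_2$.
   Context: A multiplicative Lie algebra is a group $(G,\cdot)$ with a binary operation $\star$ such that for all $x,y,z\in G$: $x\star x=1$; $x\star(yz)=(x\star y)\,{}^y(x\star z)$; $(xy)\star z={}^x(y\star z)(x\star z)$; $((x\star y)\star{}^yz)((y\star z)\star{}^zx)((z\star x)\star{}^xy)=1$; ${}^z(x\star y)={}^zx\star{}^zy$, where ${}^xy=xyx^{-1}$. Homomorphisms preserve both operations. $Z(G)$ is the group center, $LZ(G)=\{x: x\star y=1\ \forall y\}$, $\mathcal Z(G)=LZ(G)\cap Z(G)$; $[x,y]$ is the group commutator; ${}^M[G,G]=(G\star G)[G,G]$ with $G\star G$ the ideal generated by all $a\star b$. $G_1,G_2$ are isoclinic via $(\nu,\mu')$ if $\nu:G_1/\mathcal Z(G_1)\to G_2/\mathcal Z(G_2)$ and $\mu':{}^M[G_1,G_1]\to{}^M[G_2,G_2]$ are multiplicative Lie algebra isomorphisms with $\mu'([g,g'])=[h,h']$ and $\mu'(g\star g')=h\star h'$ whenever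 $\nu(g\mathcal Z(G_1))=h\mathcal Z(G_2)$ and $\nu(g'\mathcal Z(G_1))=h'\mathcal Z(G_2)$. *)

Record MLA := {
  carrier :> Type;
  mul : carrier -> carrier -> carrier;
  inv : carrier -> carrier;
  one : carrier;
  star : carrier -> carrier -> carrier;
  mulA : forall x y z, mul x (mul y z) = mul (mul x y) z;
  mul1x : forall x, mul one x = x;
  mulx1 : forall x, mul x one = x;
  mulVx : forall x, mul (inv x) x = one;
  mulxV : forall x, mul x (inv x) = one;
  (* multiplicative Lie algebra axioms, with  ^x y = x y x^-1 *)
  star_xx : forall x, star x x = one;
  star_xM : forall x y z,
    star x (mul y z) = mul (star x y) (mul (mul y (star x z)) (inv y));
  star_Mx : forall x y z,
    star (mul x y) z = mul (mul (mul x (star y z)) (inv x)) (star x z);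
  star_jacobi : forall x y z,
    mul (mul (star (star x y) (mul (mul y z) (inv y)))
             (star (star y z) (mul (mul z x) (inv z))))
        (star (star z x) (mul (mul x y) (inv x))) = one;
  star_conj : forall x y z,
    mul (mul z (star x y)) (inv z) =
    star (mul (mul z x) (inv z)) (mul (mul z y) (inv z))
}.

Arguments mul {G} : rename.
Arguments inv {G} : rename.
Arguments one {G} : rename.
Arguments star {G} : rename.

Section Defs.
Variable G : MLA.

Definition comm (x y : G) : G := mul (mul (mul x y) (inv x)) (inv y).

(* group center Z(G), LZ(G), and  \mathcal Z(G) = LZ(G) ∩ Z(G) *)
Definition center (x : G) : Prop := forall y : G, mul x y = mul y x.
Definition lie_center (x : G) : Prop := forall y : G, star x y = one.
Definition mcenter (x : G) : Prop := lie_center x /\ center x.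

Definition is_subgroup (H : G -> Prop) : Prop :=
  H one /\ (forall x y, H x -> H y -> H (mul x y)) /\ (forall x, H x -> H (inv x)).

Definition is_ideal (I : G -> Prop) : Prop :=
  is_subgroup I /\
  (forall x y, I x -> I (mul (mul y x) (inv y))) /\
  (forall x y, I x -> I (star x y)).

Definition star_ideal (x : G) : Prop :=
  forall I, is_ideal I -> (forall a b, I (star a b)) -> I x.

Definition comm_subgroup (x : G) : Prop :=
  forall H, is_subgroup H -> (forall a b, H (comm a b)) -> H x.

(* ^M[G,G] = (G ⋆ G)[G,G] *)
Definition Mcomm (x : G) : Prop :=
  exists a b, star_ideal a /\ comm_subgroup b /\ x = mul a b.

Definition zcong (x y : G) : Prop := mcenter (mul (inv y) x).

End Defs.

Definition is_MLA_hom (G1 G2 : MLA) (f : G1 -> G2) : Prop :=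
  (forall x y, f (mul x y) = mul (f x) (f y)) /\
  (forall x y, f (star x y) = star (f x) (f y)).

(* A multiplicative Lie algebra isomorphism
     G1/\mathcal Z(G1) -> G2/\mathcal Z(G2),
   presented through a map on representatives  nu : G1 -> G2  with
   nu (g \mathcal Z(G1)) = (nu g) \mathcal Z(G2).  (Setoid encoding of the
   quotients: elements of G/\mathcal Z(G) are represented by elements of G,
   equality is zcong; the operations on the quotient are induced.) *)
Definition quot_iso (G1 G2 : MLA) (nu : G1 -> G2) : Prop :=
  (forall x y : G1, zcong G1 x y -> zcong G2 (nu x) (nu y)) /\
  (forall x y : G1, zcong G2 (nu (mul x y)) (mul (nu x) (nu y))) /\
  (forall x y : G1, zcong G2 (nu (star x y)) (star (nu x) (nu y))) /\
  (forall x y : G1, zcong G2 (nu x) (nu y) -> zcong G1 x y) /\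
  (forall h : G2, exists g : G1, zcong G2 (nu g) h).

(* A multiplicative Lie algebra isomorphism ^M[G1,G1] -> ^M[G2,G2], given
   as a map mu' : G1 -> G2 considered on the subset ^M[G1,G1]. *)
Definition Mcomm_iso (G1 G2 : MLA) (mu' : G1 -> G2) : Prop :=
  (forall x, Mcomm G1 x -> Mcomm G2 (mu' x)) /\
  (forall x y, Mcomm G1 x -> Mcomm G1 y -> mu' (mul x y) = mul (mu' x) (mu' y)) /\
  (forall x y, Mcomm G1 x -> Mcomm G1 y -> mu' (star x y) = star (mu' x) (mu' y)) /\
  (forall x y, Mcomm G1 x -> Mcomm G1 y -> mu' x = mu' y -> x = y) /\
  (forall h, Mcomm G2 h -> exists g, Mcomm G1 g /\ mu' g = h).

Definition isoclinic_via (G1 G2 : MLA) (nu : G1 -> G2) (mu' : G1 -> G2) : Prop :=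
  quot_iso G1 G2 nu /\ Mcomm_iso G1 G2 mu' /\
  (forall (g g' : G1) (h h' : G2),
     zcong G2 (nu g) h -> zcong G2 (nu g') h' ->
     mu' (comm G1 g g') = comm G2 h h' /\ mu' (star g g') = star h h').


(* Elements of the multiplicative centre \mathcal Z(G) = LZ(G) ∩ Z(G) are
   invisible to both [star] and the group commutator.  Since every element
   of G2 is mu(g) times an element of \mathcal Z(G2), every star product and
   every commutator of G2 is the image of one of G1; hence mu maps
   ^M[G1,G1] onto ^M[G2,G2], injectively because ker mu meets ^M[G1,G1]
   trivially.  The same invisibility makes nu well defined and gives the
   compatibility conditions; nu is injective because, when mu(g) lies in
   \mathcal Z(G2), both g ⋆ y and [g,y] lie in ker mu ∩ ^M[G1,G1] = 1. *)

Section GroupFacts.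
Variable G : MLA.
Implicit Types x y z : G.

Lemma mulKg x y : mul (inv x) (mul x y) = y.
Proof. rewrite mulA, mulVx, mul1x. reflexivity. Qed.

Lemma mulKVg x y : mul x (mul (inv x) y) = y.
Proof. rewrite mulA, mulxV, mul1x. reflexivity. Qed.

Lemma mulgK x y : mul (mul y x) (inv x) = y.
Proof. rewrite <- mulA, mulxV, mulx1. reflexivity. Qed.

Lemma mulgKV x y : mul (mul y (inv x)) x = y.
Proof. rewrite <- mulA, mulVx, mulx1. reflexivity. Qed.

Lemma mulgI x y z : mul x y = mul x z -> y = z.
Proof. intros E. rewrite <- (mulKg x y), E, mulKg. reflexivity. Qed.

Lemma invg_uniq x y : mul x y = one -> inv x = y.
Proof. intros E. apply (mulgI x). rewrite E, mulxV. reflexivity. Qed.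

Lemma invgK x : inv (inv x) = x.
Proof. apply invg_uniq, mulVx. Qed.

Lemma invg1 : inv (@one G) = one.
Proof. apply invg_uniq, mul1x. Qed.

Lemma invMg x y : inv (mul x y) = mul (inv y) (inv x).
Proof. apply invg_uniq. rewrite <- mulA, mulKVg, mulxV. reflexivity. Qed.

Lemma mulg_idem x : mul x x = x -> x = one.
Proof. intros E. apply (mulgI x). rewrite mulx1. exact E. Qed.

Lemma conjg_eq1 x y : mul (mul x y) (inv x) = one -> y = one.
Proof.
  intros E. rewrite <- (mulKg x y), <- (mulgKV x (mul x y)), E, mul1x, mulVx.
  reflexivity.
Qed.

Lemma conjgM x y z :
  mul (mul x (mul y z)) (inv x) =
  mul (mul (mul x y) (inv x)) (mul (mul x z) (inv x)).
Proof. rewrite <- !mulA, mulKg. reflexivity. Qed.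

Lemma comm_eq1 x y : comm G x y = one -> mul x y = mul y x.
Proof.
  unfold comm. intros E.
  assert (Conj : mul (mul x y) (inv x) = y).
  { rewrite <- (mulgKV y (mul (mul x y) (inv x))), E, mul1x. reflexivity. }
  rewrite <- (mulgKV x (mul x y)), Conj. reflexivity.
Qed.

Lemma comm_center x y : center G x -> comm G x y = one.
Proof. intros Hx. unfold comm. rewrite Hx, mulgK, mulxV. reflexivity. Qed.

Lemma star1x y : star (@one G) y = one.
Proof.
  apply mulg_idem. symmetry.
  pose proof (star_Mx G one one y) as E.
  rewrite mul1x, mul1x, invg1, mulx1 in E. exact E.
Qed.

(* Expanding [star (x y) (x y) = 1] by both distributivity laws leaves
   [^x (star y x * star x y) = 1]. *)
Lemma star_antisym x y : star x y = inv (star y x).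
Proof.
  symmetry. apply invg_uniq, (conjg_eq1 x). rewrite conjgM.
  pose proof (star_xx G (mul x y)) as E.
  rewrite star_Mx, (star_xM G y x y), (star_xM G x x y), !star_xx, mul1x, mulx1,
    mulxV, mulx1 in E.
  exact E.
Qed.

Lemma mcenter1 : mcenter G one.
Proof.
  split; intros y.
  - apply star1x.
  - rewrite mul1x, mulx1. reflexivity.
Qed.

Lemma zcong_refl x : zcong G x x.
Proof. unfold zcong. rewrite mulVx. apply mcenter1. Qed.

Lemma mcenterV z : mcenter G z -> mcenter G (inv z).
Proof.
  intros [Lz Cz]. split; intros y.
  - pose proof (star_Mx G (inv z) z y) as E.
    rewrite mulVx, star1x, Lz, mulx1, mulxV, mul1x in E. symmetry. exact E.
  - apply (mulgI z). rewrite mulKVg, mulA, Cz, mulgK. reflexivity.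
Qed.

Lemma zcong_mcenterMr x z : mcenter G z -> zcong G x (mul x z).
Proof.
  intros Zz. unfold zcong. rewrite invMg, <- mulA, mulVx, mulx1. apply mcenterV, Zz.
Qed.

Lemma star_mcenterMl x y z : mcenter G z -> star (mul x z) y = star x y.
Proof. intros [Lz _]. rewrite star_Mx, Lz, mulx1, mulxV, mul1x. reflexivity. Qed.

Lemma star_mcenterMr x y z : mcenter G z -> star x (mul y z) = star x y.
Proof.
  intros [Lz _].
  rewrite star_xM, (star_antisym x z), Lz, invg1, mulx1, mulxV, mulx1.
  reflexivity.
Qed.

Lemma conjg_centerMl x y z : center G z ->
  mul (mul (mul x z) y) (inv (mul x z)) = mul (mul x y) (inv x).
Proof.
  intros Cz. rewrite invMg, <- (mulA _ x z y), (Cz y), (mulA _ x y z), <- mulA,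
    mulKVg.
  reflexivity.
Qed.

Lemma comm_centerMl x y z : center G z -> comm G (mul x z) y = comm G x y.
Proof. intros Cz. unfold comm. rewrite conjg_centerMl by exact Cz. reflexivity. Qed.

Lemma comm_centerMr x y z : center G z -> comm G x (mul y z) = comm G x y.
Proof.
  intros Cz. unfold comm.
  rewrite invMg, (mulA _ x y z), <- (mulA _ (mul x y) z (inv x)), (Cz (inv x)),
    mulA, (mulA _ (mul x y) (inv x) z), mulgK.
  reflexivity.
Qed.

Lemma star_zcong x x' y y' :
  zcong G x x' -> zcong G y y' -> star x y = star x' y'.
Proof.
  intros Ex Ey. rewrite <- (mulKVg x' x), <- (mulKVg y' y),
    (star_mcenterMl _ _ _ Ex), (star_mcenterMr _ _ _ Ey).
  reflexivity.
Qed.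

Lemma comm_zcong x x' y y' :
  zcong G x x' -> zcong G y y' -> comm G x y = comm G x' y'.
Proof.
  intros Ex Ey. rewrite <- (mulKVg x' x), <- (mulKVg y' y),
    (comm_centerMl _ _ _ (proj2 Ex)), (comm_centerMr _ _ _ (proj2 Ey)).
  reflexivity.
Qed.

Lemma star_ideal_is_ideal : is_ideal G (star_ideal G).
Proof.
  split; [split; [| split] | split].
  - intros I [[I1 _] _] _. exact I1.
  - intros x y Sx Sy I HI gens. apply HI; [apply Sx | apply Sy]; assumption.
  - intros x Sx I HI gens. apply HI, Sx; assumption.
  - intros x y Sx I HI gens. apply HI, Sx; assumption.
  - intros x y Sx I HI gens. apply HI, Sx; assumption.
Qed.

Lemma star_ideal_star x y : star_ideal G (star x y).
Proof. intros I _ gens. apply gens. Qed.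

Lemma comm_subgroup_is_subgroup : is_subgroup G (comm_subgroup G).
Proof.
  split; [| split].
  - intros H [H1 _] _. exact H1.
  - intros x y Cx Cy H HH gens. apply HH; [apply Cx | apply Cy]; assumption.
  - intros x Cx H HH gens. apply HH, Cx; assumption.
Qed.

Lemma comm_subgroup_comm x y : comm_subgroup G (comm G x y).
Proof. intros H _ gens. apply gens. Qed.

Lemma Mcomm_star x y : Mcomm G (star x y).
Proof.
  exists (star x y), one. split; [apply star_ideal_star |].
  split; [apply comm_subgroup_is_subgroup | rewrite mulx1; reflexivity].
Qed.

Lemma Mcomm_comm x y : Mcomm G (comm G x y).
Proof.
  exists one, (comm G x y). split; [apply star_ideal_is_ideal |].
  split; [apply comm_subgroup_comm | rewrite mul1x; reflexivity].
Qed.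

(* (a b)^-1 (a' b') = (b^-1 (a^-1 a') b) (b^-1 b'), using that G ⋆ G is normal. *)
Lemma Mcomm_divl x y : Mcomm G x -> Mcomm G y -> Mcomm G (mul (inv y) x).
Proof.
  intros [a' [b' [Sa' [Cb' ->]]]] [a [b [Sa [Cb ->]]]].
  destruct star_ideal_is_ideal as [[_ [SM SV]] [SJ _]].
  destruct comm_subgroup_is_subgroup as [_ [CM CV]].
  exists (mul (mul (inv b) (mul (inv a) a')) (inv (inv b))), (mul (inv b) b').
  split; [apply SJ, SM; auto |].
  split; [apply CM; auto |].
  rewrite invgK, invMg, <- (mulA _ _ b (mul (inv b) b')), mulKVg, !mulA.
  reflexivity.
Qed.

End GroupFacts.

Section Morphism.
Variables (G1 G2 : MLA) (mu : G1 -> G2).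
Hypothesis mu_hom : is_MLA_hom G1 G2 mu.

Lemma morphM x y : mu (mul x y) = mul (mu x) (mu y).
Proof. apply (proj1 mu_hom). Qed.

Lemma morph_star x y : mu (star x y) = star (mu x) (mu y).
Proof. apply (proj2 mu_hom). Qed.

Lemma morph1 : mu one = one.
Proof. apply mulg_idem. rewrite <- morphM, mul1x. reflexivity. Qed.

Lemma morphV x : mu (inv x) = inv (mu x).
Proof. symmetry. apply invg_uniq. rewrite <- morphM, mulxV. apply morph1. Qed.

Lemma morph_comm x y : mu (comm G1 x y) = comm G2 (mu x) (mu y).
Proof. unfold comm. rewrite !morphM, !morphV. reflexivity. Qed.

Lemma zcong_morph x y :
  zcong G2 (mu x) (mu y) <-> mcenter G2 (mu (mul (inv y) x)).
Proof. unfold zcong. rewrite morphM, morphV. tauto. Qed.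

Lemma subgroup_preim (H : G2 -> Prop) :
  is_subgroup G2 H -> is_subgroup G1 (fun x => H (mu x)).
Proof.
  intros [H1 [HM HV]]. split; [| split].
  - rewrite morph1. exact H1.
  - intros x y Hx Hy. rewrite morphM. auto.
  - intros x Hx. rewrite morphV. auto.
Qed.

Lemma ideal_preim (I : G2 -> Prop) :
  is_ideal G2 I -> is_ideal G1 (fun x => I (mu x)).
Proof.
  intros [IH [IJ IS]]. split; [exact (subgroup_preim I IH) | split].
  - intros x y Ix. rewrite !morphM, morphV. auto.
  - intros x y Ix. rewrite morph_star. auto.
Qed.

Lemma morph_star_ideal x : star_ideal G1 x -> star_ideal G2 (mu x).
Proof.
  intros Sx I HI gens. apply (Sx _ (ideal_preim I HI)).
  intros a b. rewrite morph_star. apply gens.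
Qed.

Lemma morph_comm_subgroup x : comm_subgroup G1 x -> comm_subgroup G2 (mu x).
Proof.
  intros Cx H HH gens. apply (Cx _ (subgroup_preim H HH)).
  intros a b. rewrite morph_comm. apply gens.
Qed.

Lemma morph_Mcomm x : Mcomm G1 x -> Mcomm G2 (mu x).
Proof.
  intros [a [b [Sa [Cb ->]]]]. exists (mu a), (mu b).
  split; [apply morph_star_ideal; exact Sa |].
  split; [apply morph_comm_subgroup; exact Cb | apply morphM].
Qed.

Definition morph_image (P : G1 -> Prop) (h : G2) : Prop :=
  exists g, P g /\ mu g = h.

Lemma subgroup_image (H : G1 -> Prop) :
  is_subgroup G1 H -> is_subgroup G2 (morph_image H).
Proof.
  intros [H1 [HM HV]]. split; [| split].
  - exists one. split; [exact H1 | apply morph1].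
  - intros x y [g [Hg <-]] [g' [Hg' <-]].
    exists (mul g g'). split; [auto | apply morphM].
  - intros x [g [Hg <-]]. exists (inv g). split; [auto | apply morphV].
Qed.

Section CentralCover.
Hypothesis cover : forall h : G2, exists (g : G1) (z : G2),
  mcenter G2 z /\ h = mul (mu g) z.

Lemma morph_mcenter w : mcenter G1 w -> mcenter G2 (mu w).
Proof.
  intros [Lw Cw]. split; intros h; destruct (cover h) as [g [z [Zz ->]]].
  - rewrite star_mcenterMr by exact Zz. rewrite <- morph_star, Lw. apply morph1.
  - rewrite mulA, <- morphM, Cw, morphM, <- !mulA, (proj2 Zz). reflexivity.
Qed.

Lemma star_in_image h h' : exists g g', star h h' = mu (star g g').
Proof.
  destruct (cover h) as [g [z [Zz ->]]], (cover h') as [g' [z' [Zz' ->]]].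
  exists g, g'.
  rewrite star_mcenterMl by exact Zz. rewrite star_mcenterMr by exact Zz'.
  symmetry. apply morph_star.
Qed.

Lemma comm_in_image h h' : exists g g', comm G2 h h' = mu (comm G1 g g').
Proof.
  destruct (cover h) as [g [z [Zz ->]]], (cover h') as [g' [z' [Zz' ->]]].
  exists g, g'.
  rewrite comm_centerMl by apply Zz. rewrite comm_centerMr by apply Zz'.
  symmetry. apply morph_comm.
Qed.

Lemma ideal_image (I : G1 -> Prop) :
  is_ideal G1 I -> is_ideal G2 (morph_image I).
Proof.
  intros [IH [IJ IS]]. split; [exact (subgroup_image I IH) | split].
  - intros x y [g [Ig <-]]. destruct (cover y) as [g' [z [Zz ->]]].
    exists (mul (mul g' g) (inv g')). split; [auto |].
    rewrite conjg_centerMl by apply Zz. rewrite !morphM, morphV. reflexivity.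
  - intros x y [g [Ig <-]]. destruct (cover y) as [g' [z [Zz ->]]].
    exists (star g g'). split; [auto |].
    rewrite star_mcenterMr by exact Zz. apply morph_star.
Qed.

Lemma star_ideal_image h : star_ideal G2 h -> morph_image (star_ideal G1) h.
Proof.
  intros Sh. apply (Sh _ (ideal_image _ (star_ideal_is_ideal G1))).
  intros a b. destruct (star_in_image a b) as [g [g' ->]].
  exists (star g g'). split; [apply star_ideal_star | reflexivity].
Qed.

Lemma comm_subgroup_image h : comm_subgroup G2 h -> morph_image (comm_subgroup G1) h.
Proof.
  intros Ch. apply (Ch _ (subgroup_image _ (comm_subgroup_is_subgroup G1))).
  intros a b. destruct (comm_in_image a b) as [g [g' ->]].
  exists (comm G1 g g'). split; [apply comm_subgroup_comm | reflexivity].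
Qed.

Lemma Mcomm_image h : Mcomm G2 h -> morph_image (Mcomm G1) h.
Proof.
  intros [a [b [Sa [Cb ->]]]].
  destruct (star_ideal_image _ Sa) as [g [Sg <-]].
  destruct (comm_subgroup_image _ Cb) as [g' [Cg' <-]].
  exists (mul g g'). split; [exists g, g'; auto | apply morphM].
Qed.

Hypothesis ker_Mcomm : forall x : G1, Mcomm G1 x -> mu x = one -> x = one.

Lemma mcenter_of_morph w : mcenter G2 (mu w) -> mcenter G1 w.
Proof.
  intros [Lw Cw]. split; intros y.
  - apply ker_Mcomm; [apply Mcomm_star |]. rewrite morph_star. apply Lw.
  - apply comm_eq1, ker_Mcomm; [apply Mcomm_comm |].
    rewrite morph_comm. apply comm_center. exact Cw.
Qed.

Lemma morph_inj_Mcomm x y : Mcomm G1 x -> Mcomm G1 y -> mu x = mu y -> x = y.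
Proof.
  intros Mx My E.
  assert (D : mul (inv y) x = one).
  { apply ker_Mcomm; [apply Mcomm_divl; assumption |].
    rewrite morphM, morphV, E, mulVx. reflexivity. }
  rewrite <- (mulKVg _ y x), D, mulx1. reflexivity.
Qed.

Lemma morph_quot_iso : quot_iso G1 G2 mu.
Proof.
  split; [| split; [| split; [| split]]].
  - intros x y Exy. apply zcong_morph, morph_mcenter; assumption.
  - intros x y. rewrite morphM. apply zcong_refl.
  - intros x y. rewrite morph_star. apply zcong_refl.
  - intros x y Exy. apply mcenter_of_morph, zcong_morph. exact Exy.
  - intros h. destruct (cover h) as [g [z [Zz ->]]].
    exists g. apply zcong_mcenterMr, Zz.
Qed.

Lemma morph_Mcomm_iso : Mcomm_iso G1 G2 mu.
Proof.
  split; [| split; [| split; [| split]]].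
  - exact morph_Mcomm.
  - intros x y _ _. apply morphM.
  - intros x y _ _. apply morph_star.
  - exact morph_inj_Mcomm.
  - exact Mcomm_image.
Qed.

End CentralCover.

Lemma morph_isoclinic_compat (g g' : G1) (h h' : G2) :
  zcong G2 (mu g) h -> zcong G2 (mu g') h' ->
  mu (comm G1 g g') = comm G2 h h' /\ mu (star g g') = star h h'.
Proof.
  intros Eg Eg'. rewrite morph_comm, morph_star.
  split; [apply comm_zcong | apply star_zcong]; assumption.
Qed.

End Morphism.

Theorem corollary4p9 (G1 G2 : MLA) (mu : G1 -> G2) :
  is_MLA_hom G1 G2 mu ->
  (* ker mu ∩ ^M[G1,G1] = 1 *)
  (forall x : G1, Mcomm G1 x -> mu x = one -> x = one) ->
  (* mu(G1) \mathcal Z(G2) = G2 *)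
  (forall h : G2, exists (g : G1) (z : G2), mcenter G2 z /\ h = mul (mu g) z) ->
  (* nu(g \mathcal Z(G1)) = mu(g) \mathcal Z(G2), and mu restricted to ^M[G1,G1] *)
  isoclinic_via G1 G2 mu mu.
Proof.
  intros mu_hom ker_Mcomm cover.
  split; [| split].
  - exact (morph_quot_iso _ _ _ mu_hom cover ker_Mcomm).
  - exact (morph_Mcomm_iso _ _ _ mu_hom cover ker_Mcomm).
  - exact (morph_isoclinic_compat _ _ _ mu_hom).
Qed.
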